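(* Let $\gamma\in[0,1]$. Let $\Lambda:\mathbb{R}\to\mathbb{R}$ be $C^2$, monotonically increasing and bi-asymptotically constant with $\lim_{t\to\pm\infty}\Lambda(t)=\lambda^\pm$, and for $r>0$ put $\Lambda_r(\tau)=\Lambda(r\tau)$. Let $V_p(\Lambda_r(\tau))>0$ and $c(\Lambda_r(\tau))>0$ be parameter functions, set $V_p^-=\lim_{\tau\to-\infty}V_p(\Lambda_r(\tau))>0$, and consider the nonautonomous system $$\frac{dv}{d\tau}=\frac{(1-\gamma)V_p(\Lambda_r(\tau))^2}{(V_p^-)^2}m^3-(1-\gamma m^3)v^2,\qquad \frac{dm}{d\tau}=(1-m)v-c(\Lambda_r(\tau))m .$$ Assume the frozen system (parameters fixed at $\Lambda_r=\lambda$) has three equilibria at $\lambda=\lambda^-$, namely $\mathcal{O}=(0,0)$, a saddle $\mathcal{U}^-$ and a stable storm state $\mathcal{S}^-$, and three equilibria at $\lambda=\lambda^+$, namely $\mathcal{O}$, $\mathcal{U}^+$, $\mathcal{S}^+$. Assume there exist continuous paths $(\tau,p_u(\tau))$ and $(\tau,p_s(\tau))$, where for each $\tau$, $p_u(\tau)$ is the unstable (saddle) storm equilibrium and $p_s(\tau)$ the stable storm equilibrium of the frozen system at $\Lambda_r(\tau)$, with $p_u(\tau)\ne p_s(\tau)$ for all $\tau$, $p_u(\tau)\to\mathcal{U}^\pm$ and $p_s(\tau)\to\mathcal{S}^\pm$ as $\tau\to\pm\infty$. If either $\tau\mapsto V_p(\Lambda_r(\tau))$ or $\tau\mapsto c(\Lambda_r(\tau))$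 is nonincreasing, then there is no rate-induced tipping away from the stable storm state $\mathcal{S}^-$ to the non-storm state $\mathcal{O}$: the solution that converges to $\mathcal{S}^-$ as $\tau\to-\infty$ does not converge to $\mathcal{O}$ as $\tau\to\infty$.
   Context: For frozen parameter values, the positive equilibria are the points $(v,v/(v+c))$ with $v>0$ a zero of $p(v,V_p,c)=(1-\gamma)(V_p/V_p^-)^2v+\gamma v^3-(v+c)^3$; $\mathcal{O}=(0,0)$ is always a stable equilibrium (non-storm state). Rate-induced tipping away from $\mathcal{S}^-$ to $\mathcal{O}$ means that for some rate $r>0$ the solution of the nonautonomous system limiting to $\mathcal{S}^-$ as $\tau\to-\infty$ fails to end-point track the stable path $p_s$ and instead converges to $\mathcal{O}$ as $\tau\to\infty$. *)

From Stdlib Require Import Reals.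
From Coquelicot Require Import Coquelicot.
Open Scope R_scope.

Definition C2 (f : R -> R) : Prop :=
  forall t, ex_derive f t /\ ex_derive (Derive f) t /\ continuous (Derive_n f 2) t.

Definition bi_asymp_const (f : R -> R) (lm lp : R) : Prop :=
  is_lim f m_infty lm /\ is_lim f p_infty lp /\
  is_lim (Derive f) m_infty 0 /\ is_lim (Derive f) p_infty 0.

Definition F1 (gamma : R) (Vp : R -> R) (Vpm lam v m : R) : R :=
  (1 - gamma) * (Vp lam) ^ 2 / Vpm ^ 2 * m ^ 3 - (1 - gamma * m ^ 3) * v ^ 2.
Definition F2 (c : R -> R) (lam v m : R) : R :=
  (1 - m) * v - c lam * m.

Definition equilibrium gamma Vp c Vpm lam (e : R * R) : Prop :=
  F1 gamma Vp Vpm lam (fst e) (snd e) = 0 /\ F2 c lam (fst e) (snd e) = 0.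

Definition J11 gamma Vp Vpm lam (e : R * R) : R :=
  Derive (fun v => F1 gamma Vp Vpm lam v (snd e)) (fst e).
Definition J12 gamma Vp Vpm lam (e : R * R) : R :=
  Derive (fun m => F1 gamma Vp Vpm lam (fst e) m) (snd e).
Definition J21 c lam (e : R * R) : R :=
  Derive (fun v => F2 c lam v (snd e)) (fst e).
Definition J22 c lam (e : R * R) : R :=
  Derive (fun m => F2 c lam (fst e) m) (snd e).

Definition jac_eigenvalue gamma Vp c Vpm lam (e : R * R) (z : C) : Prop :=
  Cminus (Cmult (Cminus (RtoC (J11 gamma Vp Vpm lam e)) z)
                (Cminus (RtoC (J22 c lam e)) z))
         (RtoC (J12 gamma Vp Vpm lam e * J21 c lam e)) = RtoC 0.

Definition stable_eq gamma Vp c Vpm lam (e : R * R) : Prop :=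
  equilibrium gamma Vp c Vpm lam e /\
  forall z : C, jac_eigenvalue gamma Vp c Vpm lam e z -> Re z < 0.

Definition saddle_eq gamma Vp c Vpm lam (e : R * R) : Prop :=
  equilibrium gamma Vp c Vpm lam e /\
  exists l1 l2 : R, l1 < 0 < l2 /\
    jac_eigenvalue gamma Vp c Vpm lam e (RtoC l1) /\
    jac_eigenvalue gamma Vp c Vpm lam e (RtoC l2).

Definition three_equilibria gamma Vp c Vpm lam (U S : R * R) : Prop :=
  0 < fst U /\ 0 < fst S /\
  saddle_eq gamma Vp c Vpm lam U /\ stable_eq gamma Vp c Vpm lam S /\
  (forall e : R * R, 0 <= fst e ->
     (equilibrium gamma Vp c Vpm lam e <-> e = (0, 0) \/ e = U \/ e = S)).

Definition cvg_to (f : R -> R * R) (F : Rbar) (p : R * R) : Prop :=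
  filterlim f (Rbar_locally F) (locally p).

Definition nonincreasing (f : R -> R) : Prop :=
  forall s t, s <= t -> f t <= f s.

From Stdlib Require Import Reals Lra Lia Psatz Classical.
From Coquelicot Require Import Coquelicot.
Open Scope R_scope.

(* Along the stable path every frozen storm state (v, m) satisfies the stability condition
   [phi gamma m > 0] and [c ^ 2 = (1 - gamma) (Vp / Vpm) ^ 2 kappa gamma m], and [kappa gamma]
   is decreasing where [phi gamma > 0].  The m-coordinates of the path have a lower bound M with
   [phi gamma M > 0], so [c ^ 2 <= (1 - gamma) (Vp / Vpm) ^ 2 K] with [K = kappa gamma M <
   kappa gamma mu] for some [0 < mu < M].  If [s] (either [Vp] or [c] along the parameter path)
   is nonincreasing, this uniform gap yields a width [w] such that the vector field points into
   [{v > s w, m > mu}] on its boundary.  The solution leaving S- lies in this region near -oo,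
   hence forever, and [m > mu] keeps it away from O. *)

(** * Real analysis *)

Lemma filterlim_gt {T} {F : (T -> Prop) -> Prop} (f : T -> R) (l a : R) :
  filterlim f F (locally l) -> a < l -> F (fun t => a < f t).
Proof. intros H Hl; exact (H _ (locally_open _ _ (open_gt a) (fun _ h => h) l Hl)). Qed.

Lemma filterlim_lt {T} {F : (T -> Prop) -> Prop} (f : T -> R) (l a : R) :
  filterlim f F (locally l) -> l < a -> F (fun t => f t < a).
Proof. intros H Hl; exact (H _ (locally_open _ _ (open_lt a) (fun _ h => h) l Hl)). Qed.

Lemma filterlim_ge_of_gt {T} {F : (T -> Prop) -> Prop} {FF : ProperFilter F}
  (f : T -> R) (l a : R) :
  filterlim f F (locally l) -> (forall t, a < f t) -> a <= l.
Proof.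
  intros H Ha.
  exact (filterlim_le (fun _ => a) f a l (filter_forall _ (fun t => Rlt_le _ _ (Ha t)))
           (filterlim_const a) H).
Qed.

Lemma cvg_to_fst (f : R -> R * R) (F : Rbar) (p : R * R) :
  cvg_to f F p -> filterlim (fun t => fst (f t)) (Rbar_locally F) (locally (fst p)).
Proof.
  intro H; destruct p as [x y]; exact (filterlim_comp _ _ _ _ _ _ _ _ H (continuous_fst x y)).
Qed.

Lemma cvg_to_snd (f : R -> R * R) (F : Rbar) (p : R * R) :
  cvg_to f F p -> filterlim (fun t => snd (f t)) (Rbar_locally F) (locally (snd p)).
Proof.
  intro H; destruct p as [x y]; exact (filterlim_comp _ _ _ _ _ _ _ _ H (continuous_snd x y)).
Qed.

Lemma filterlim_scal_m_infty (r : R) :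
  0 < r -> filterlim (fun t => r * t) (Rbar_locally m_infty) (Rbar_locally m_infty).
Proof.
  intros Hr P [M HM]; exists (M / r); intros t Ht; apply HM.
  apply (Rmult_lt_compat_l r) in Ht; [|exact Hr].
  replace (r * (M / r)) with M in Ht by (field; lra); exact Ht.
Qed.

Lemma nonincreasing_le_lim_m_infty (s : R -> R) (L : R) :
  nonincreasing s -> filterlim s (Rbar_locally m_infty) (locally L) -> forall t, s t <= L.
Proof.
  intros Hs Hlim t.
  assert (Hev : Rbar_locally m_infty (fun u => s t <= s u))
    by (exists t; intros u Hu; apply Hs; lra).
  exact (filterlim_le (fun _ => s t) s (s t) L Hev (filterlim_const _) Hlim).
Qed.

Lemma R_ball (x e y : R) : Rabs (y - x) < e -> ball x e y.
Proof. exact (fun H => H). Qed.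

Lemma continuous_lim_lower_bound (Q : R -> Prop) (g : R -> R) (gm gp : R) :
  (forall t, continuous g t) ->
  filterlim g (Rbar_locally m_infty) (locally gm) ->
  filterlim g (Rbar_locally p_infty) (locally gp) ->
  (forall t, Q (g t)) -> locally gm Q -> locally gp Q ->
  exists M, Q M /\ M <= gm /\ forall t, M <= g t.
Proof.
  intros Hc Hm Hp HQ [e1 Q1] [e2 Q2].
  assert (He1 := cond_pos e1); assert (He2 := cond_pos e2).
  destruct (filterlim_gt g gm (gm - e1 / 2) Hm ltac:(lra)) as [T1 HT1].
  destruct (filterlim_gt g gp (gp - e2 / 2) Hp ltac:(lra)) as [T2 HT2].
  assert (HT := Rle_trans _ _ _ (Rmin_l T1 T2) (Rmax_l T1 T2)).
  destruct (continuity_ab_min g (Rmin T1 T2) (Rmax T1 T2) HT) as [x [Hx _]].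
  { intros t _; apply continuity_pt_filterlim, Hc. }
  assert (Qm : Q (gm - e1 / 2)) by (apply Q1, R_ball; rewrite Rabs_left; lra).
  assert (Qp : Q (gp - e2 / 2)) by (apply Q2, R_ball; rewrite Rabs_left; lra).
  exists (Rmin (Rmin (gm - e1 / 2) (gp - e2 / 2)) (g x)); repeat split.
  - repeat apply Rmin_case; auto.
  - generalize (Rmin_l (Rmin (gm - e1 / 2) (gp - e2 / 2)) (g x)),
      (Rmin_l (gm - e1 / 2) (gp - e2 / 2)); lra.
  - intro t.
    generalize (Rmin_l (Rmin (gm - e1 / 2) (gp - e2 / 2)) (g x)),
      (Rmin_r (Rmin (gm - e1 / 2) (gp - e2 / 2)) (g x)),
      (Rmin_l (gm - e1 / 2) (gp - e2 / 2)), (Rmin_r (gm - e1 / 2) (gp - e2 / 2)).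
    destruct (Rlt_or_le t T1) as [Ht1|Ht1]; [generalize (HT1 t Ht1); lra|].
    destruct (Rlt_or_le T2 t) as [Ht2|Ht2]; [generalize (HT2 t Ht2); lra|].
    assert (g x <= g t); [|lra].
    apply Hx; split; [apply (Rle_trans _ T1); [apply Rmin_l | exact Ht1]
                     | apply (Rle_trans _ T2); [exact Ht2 | apply Rmax_r]].
Qed.

Lemma first_exit_time (In : R -> Prop) (T t1 : R) :
  (forall t, t < T -> In t) -> ~ In t1 ->
  exists t0, (forall u, u < t0 -> In u) /\
    ~ (exists d, 0 < d /\ forall u, t0 <= u < t0 + d -> In u).
Proof.
  intros HT Ht1.
  set (E := fun x => forall u, u <= x -> In u).
  assert (HE : bound E).
  { exists t1; intros x Ex; destruct (Rle_or_lt x t1) as [|Hx]; [assumption|].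
    exfalso; apply Ht1, Ex; lra. }
  destruct (completeness E HE) as [t0 [Hub Hlub]]; [exists (T - 1); intros u Hu; apply HT; lra|].
  assert (Hbefore : forall u, u < t0 -> In u).
  { intros u Hu; apply NNPP; intro Hu'.
    assert (t0 <= u); [|lra].
    apply Hlub; intros x Ex; destruct (Rle_or_lt x u) as [|Hx]; [assumption|].
    exfalso; apply Hu', Ex; lra. }
  exists t0; split; [exact Hbefore|].
  intros [d [Hd Hafter]].
  assert (t0 + d / 2 <= t0); [|lra].
  apply Hub; intros u Hu; destruct (Rlt_or_le u t0); [apply Hbefore | apply Hafter]; lra.
Qed.

Lemma continuous_left_ge (f : R -> R) (t0 c : R) :
  continuous f t0 -> (forall u, u < t0 -> c < f u) -> c <= f t0.
Proof.
  intros Hf Hleft; destruct (Rle_or_lt c (f t0)) as [|Hlt]; [assumption|exfalso].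
  destruct (filterlim_lt f (f t0) c Hf Hlt) as [d Hd]; assert (Hd0 := cond_pos d).
  assert (f (t0 - d / 2) < c) by (apply Hd, R_ball; rewrite Rabs_left; lra).
  specialize (Hleft (t0 - d / 2)); lra.
Qed.

Lemma continuous_right_gt (f : R -> R) (t0 c : R) :
  continuous f t0 -> c < f t0 -> exists d, 0 < d /\ forall u, t0 <= u < t0 + d -> c < f u.
Proof.
  intros Hf Hlt; destruct (filterlim_gt f (f t0) c Hf Hlt) as [d Hd].
  exists d; split; [apply cond_pos|]; intros u Hu.
  apply Hd, R_ball; rewrite Rabs_pos_eq; lra.
Qed.

Lemma is_derive_nonpos_of_left_ge (f : R -> R) (t0 l : R) :
  is_derive f t0 l -> (forall u, u < t0 -> f t0 <= f u) -> l <= 0.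
Proof.
  intros Hd Hleft; apply is_derive_Reals in Hd.
  destruct (Rle_or_lt l 0) as [|Hl]; [assumption|exfalso].
  destruct (Hd (l / 2) ltac:(lra)) as [d Hquot]; assert (Hd0 := cond_pos d).
  set (h := - (d / 2)).
  assert (Hq := Hquot h ltac:(unfold h; lra) ltac:(unfold h; rewrite Rabs_left; lra)).
  assert (Hf := Hleft (t0 + h) ltac:(unfold h; lra)).
  assert ((f (t0 + h) - f t0) / h <= 0).
  { unfold Rdiv; assert (/ h < 0) by (apply Rinv_lt_0_compat; unfold h; lra); nra. }
  apply Rabs_def2 in Hq; lra.
Qed.

Lemma trapped_region (v m dv dm s : R -> R) (w mu : R) :
  0 <= w -> (forall t, is_derive v t (dv t)) -> (forall t, is_derive m t (dm t)) ->
  nonincreasing s ->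
  (forall t, v t = s t * w -> mu <= m t -> 0 < dv t) ->
  (forall t, m t = mu -> s t * w <= v t -> 0 < dm t) ->
  Rbar_locally m_infty (fun t => s t * w < v t /\ mu < m t) ->
  forall t, s t * w < v t /\ mu < m t.
Proof.
  intros Hw Hv Hm Hs Hv_in Hm_in [T HT] t1; apply NNPP; intro Hout.
  destruct (first_exit_time _ T t1 HT Hout) as [t0 [Hbefore Hnot_after]].
  assert (Hcv := ex_derive_continuous v t0 (ex_intro _ _ (Hv t0))).
  assert (Hcm := ex_derive_continuous m t0 (ex_intro _ _ (Hm t0))).
  assert (Hsw : forall u, u <= t0 -> s t0 * w <= s u * w)
    by (intros u Hu; apply Rmult_le_compat_r; [exact Hw | apply Hs, Hu]).
  assert (Hsw' : forall u, t0 <= u -> s u * w <= s t0 * w)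
    by (intros u Hu; apply Rmult_le_compat_r; [exact Hw | apply Hs, Hu]).
  assert (Hv0 : s t0 * w <= v t0).
  { apply (continuous_left_ge v); [exact Hcv|]; intros u Hu.
    generalize (proj1 (Hbefore u Hu)) (Hsw u (Rlt_le _ _ Hu)); lra. }
  assert (Hm0 : mu <= m t0)
    by (apply (continuous_left_ge m); [exact Hcm | intros u Hu; apply (Hbefore u Hu)]).
  destruct (Rle_lt_or_eq_dec _ _ Hv0) as [Hv0'|Hv0'];
    [destruct (Rle_lt_or_eq_dec _ _ Hm0) as [Hm0'|Hm0']|].
  - apply Hnot_after.
    destruct (continuous_right_gt v t0 _ Hcv Hv0') as [d1 [Hd1 H1]].
    destruct (continuous_right_gt m t0 _ Hcm Hm0') as [d2 [Hd2 H2]].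
    exists (Rmin d1 d2); split; [apply Rmin_glb_lt; assumption|]; intros u Hu.
    generalize (Rmin_l d1 d2) (Rmin_r d1 d2) (Hsw' u (proj1 Hu)); intros.
    split; [generalize (H1 u ltac:(lra))|apply H2]; lra.
  - assert (0 < dm t0) by (apply Hm_in; [symmetry|]; assumption).
    assert (dm t0 <= 0); [|lra].
    apply (is_derive_nonpos_of_left_ge m t0); [apply Hm|].
    intros u Hu; generalize (proj2 (Hbefore u Hu)); lra.
  - assert (0 < dv t0) by (apply Hv_in; [symmetry|]; assumption).
    assert (dv t0 <= 0); [|lra].
    apply (is_derive_nonpos_of_left_ge v t0); [apply Hv|].
    intros u Hu; generalize (proj1 (Hbefore u Hu)) (Hsw u (Rlt_le _ _ Hu)); lra.
Qed.

Lemma exists_sqr_between (y x : R) : 0 <= y < x -> exists w, 0 <= w /\ y < w ^ 2 < x.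
Proof.
  intros Hyx; exists (sqrt ((y + x) / 2)); split; [apply sqrt_pos|].
  rewrite <- Rsqr_pow2, Rsqr_sqrt; lra.
Qed.

Lemma pow3_lt_compat (x y : R) : 0 <= x < y -> x ^ 3 < y ^ 3.
Proof.
  intros H; assert (0 < (y - x) * (x ^ 2 + x * y + y ^ 2)) by (apply Rmult_lt_0_compat; nra).
  nra.
Qed.

Lemma lt_of_sqr_lt (x y : R) : 0 <= y -> x ^ 2 < y ^ 2 -> x < y.
Proof. intros; nra. Qed.

Lemma not_cvg_origin (v m : R -> R) (mu : R) :
  0 < mu -> (forall t, mu < m t) -> ~ cvg_to (fun t => (v t, m t)) p_infty (0, 0).
Proof.
  intros Hmu Hm Hcvg.
  destruct (filterlim_lt _ _ _ (cvg_to_snd _ _ _ Hcvg) Hmu) as [T HT].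
  generalize (HT (T + 1) ltac:(lra)) (Hm (T + 1)); cbn [snd]; lra.
Qed.

(** * Storm equilibria of the frozen system *)

Lemma det_pos_of_eigenvalues_Re_neg (a b c d : R) :
  (forall z : C, Cminus (Cmult (Cminus (RtoC a) z) (Cminus (RtoC d) z)) (RtoC (b * c)) = RtoC 0 ->
     Re z < 0) ->
  0 < a * d - b * c.
Proof.
  intros Hspec. destruct (Rlt_or_le 0 (a * d - b * c)) as [|Hdet]; [assumption|exfalso].
  (* the larger root of the characteristic polynomial is then real and nonnegative *)
  set (D := (a + d) ^ 2 - 4 * (a * d - b * c)).
  assert (HD : 0 <= D) by (unfold D; generalize (pow2_ge_0 (a + d)); lra).
  set (s := sqrt D).
  assert (Hs2 : s * s = D) by (apply sqrt_sqrt; exact HD).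
  assert (Hs0 : 0 <= s) by apply sqrt_pos.
  assert (Htr : - (a + d) <= s) by (unfold D in Hs2; nra).
  set (z := (a + d + s) / 2).
  assert (Hz : 0 <= z) by (unfold z; lra).
  assert (Hroot : Cminus (Cmult (Cminus (RtoC a) (RtoC z)) (Cminus (RtoC d) (RtoC z)))
                    (RtoC (b * c)) = RtoC 0).
  { unfold Cminus, Cmult, Cplus, Copp, RtoC; simpl; f_equal; [|ring].
    unfold z, D in *; nra. }
  specialize (Hspec _ Hroot); simpl in Hspec; lra.
Qed.

(* At a storm equilibrium (v, m) with v, m > 0, [m * det J] equals [v ^ 2 * phi gamma m]
   (modulo the equilibrium equations), and [c ^ 2 = (1 - gamma) (Vp / Vpm) ^ 2 * kappa gamma m]. *)
Definition phi (gamma x : R) : R := 3 * x - 1 - 2 * gamma * x ^ 3.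
Definition kappa (gamma x : R) : R := (1 - x) ^ 2 * x / (1 - gamma * x ^ 3).

Lemma J11_eq gamma Vp Vpm lam e :
  J11 gamma Vp Vpm lam e = - (1 - gamma * snd e ^ 3) * (2 * fst e).
Proof. unfold J11, F1; apply is_derive_unique; auto_derive; auto; ring. Qed.

Lemma J12_eq gamma Vp Vpm lam e : J12 gamma Vp Vpm lam e =
  (1 - gamma) * Vp lam ^ 2 / Vpm ^ 2 * (3 * snd e ^ 2) + gamma * (3 * snd e ^ 2) * fst e ^ 2.
Proof.
  unfold J12, F1; apply is_derive_unique; auto_derive; auto.
  replace (Vpm * (Vpm * 1)) with (Vpm ^ 2) by ring; unfold Rdiv; ring.
Qed.

Lemma J21_eq c lam e : J21 c lam e = 1 - snd e.
Proof. unfold J21, F2; apply is_derive_unique; auto_derive; auto; ring. Qed.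

Lemma J22_eq c lam e : J22 c lam e = - fst e - c lam.
Proof. unfold J22, F2; apply is_derive_unique; auto_derive; auto; ring. Qed.

Lemma stable_storm_phi_pos gamma Vp c Vpm lam e :
  0 < fst e -> 0 < snd e -> stable_eq gamma Vp c Vpm lam e -> 0 < phi gamma (snd e).
Proof.
  intros Hv Hm [[E1 E2] Hspec].
  assert (Hdet := det_pos_of_eigenvalues_Re_neg _ _ _ _ Hspec).
  rewrite J11_eq, J12_eq, J21_eq, J22_eq in Hdet.
  unfold F1, F2 in E1, E2; destruct e as [v x]; cbn [fst snd] in *.
  set (A := (1 - gamma) * Vp lam ^ 2 / Vpm ^ 2) in *.
  assert (Hid : x * (- (1 - gamma * x ^ 3) * (2 * v) * (- v - c lam)
                      - (A * (3 * x ^ 2) + gamma * (3 * x ^ 2) * v ^ 2) * (1 - x))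
    = v ^ 2 * phi gamma x
      - 2 * (1 - gamma * x ^ 3) * v * ((1 - x) * v - c lam * x)
      - 3 * (1 - x) * (A * x ^ 3 - (1 - gamma * x ^ 3) * v ^ 2)) by (unfold phi; ring).
  rewrite E1, E2 in Hid.
  pose proof (Rmult_lt_0_compat _ _ Hm Hdet) as Hxdet; rewrite Hid in Hxdet.
  assert (0 < v ^ 2) by (apply pow_lt; exact Hv).
  nra.
Qed.

Lemma storm_equilibrium_m_pos gamma Vp c Vpm lam e :
  0 < fst e -> 0 <= c lam -> equilibrium gamma Vp c Vpm lam e -> 0 < snd e.
Proof. intros Hv Hc [_ E2]; unfold F2 in E2; nra. Qed.

Lemma stable_storm_m_phi_pos gamma Vp c Vpm lam e :
  0 < fst e -> 0 <= c lam -> stable_eq gamma Vp c Vpm lam e -> 0 < snd e /\ 0 < phi gamma (snd e).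
Proof.
  intros Hv Hc Hst; assert (Hm := storm_equilibrium_m_pos _ _ _ _ _ _ Hv Hc (proj1 Hst)).
  exact (conj Hm (stable_storm_phi_pos _ _ _ _ _ _ Hv Hm Hst)).
Qed.

Lemma storm_equilibrium_m_lt_1 gamma Vp c Vpm lam e :
  0 < fst e -> 0 < c lam -> equilibrium gamma Vp c Vpm lam e -> snd e < 1.
Proof. intros Hv Hc [_ E2]; unfold F2 in E2; nra. Qed.

Lemma one_sub_gamma_cube_pos gamma x : 0 <= gamma <= 1 -> 0 <= x < 1 -> 0 < 1 - gamma * x ^ 3.
Proof.
  intros Hg Hx. destruct (pow_lt_1_compat x 3 Hx ltac:(lia)). nra.
Qed.

Lemma storm_equilibrium_c_sqr gamma Vp c Vpm lam e :
  0 <= gamma <= 1 -> 0 < fst e -> 0 < c lam -> equilibrium gamma Vp c Vpm lam e ->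
  c lam ^ 2 = (1 - gamma) * Vp lam ^ 2 / Vpm ^ 2 * kappa gamma (snd e).
Proof.
  intros Hg Hv Hc Heq.
  assert (Hm0 := storm_equilibrium_m_pos _ _ _ _ _ _ Hv (Rlt_le _ _ Hc) Heq).
  assert (Hm1 := storm_equilibrium_m_lt_1 _ _ _ _ _ _ Hv Hc Heq).
  destruct Heq as [E1 E2]; unfold F1, F2, kappa in *; destruct e as [v x]; cbn [fst snd] in *.
  assert (Hden := one_sub_gamma_cube_pos gamma x Hg ltac:(lra)).
  assert (Hc' : c lam = (1 - x) * v / x) by (field_simplify_eq; nra).
  set (A := (1 - gamma) * Vp lam ^ 2 / Vpm ^ 2) in *.
  assert (HA : A = (1 - gamma * x ^ 3) * v ^ 2 / x ^ 3) by (field_simplify_eq; lra).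
  rewrite HA, Hc'; field; lra.
Qed.

Lemma phi_pos_right gamma mu x :
  0 <= gamma <= 1 -> 0 < mu -> 0 < phi gamma mu -> mu <= x < 1 -> 0 < phi gamma x.
Proof.
  intros Hg Hmu Hphi Hx.
  (* [phi] is a cubic, positive at [mu], nonnegative at [1], and concave on [0, 1] *)
  assert (Hid : (1 - mu) * phi gamma x = (1 - x) * phi gamma mu + (x - mu) * phi gamma 1
                + 2 * gamma * (1 - x) * (x - mu) * (1 - mu) * (1 + mu + x)) by (unfold phi; ring).
  assert (0 <= phi gamma 1) by (unfold phi; lra).
  assert (0 < (1 - x) * phi gamma mu) by (apply Rmult_lt_0_compat; lra).
  assert (0 <= (x - mu) * phi gamma 1) by (apply Rmult_le_pos; lra).
  assert (0 <= 2 * gamma * (1 - x) * (x - mu) * (1 - mu) * (1 + mu + x))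
    by (repeat apply Rmult_le_pos; lra).
  nra.
Qed.

Lemma kappa_decreasing gamma mu x :
  0 <= gamma <= 1 -> 0 < mu -> 0 < phi gamma mu -> mu < x < 1 -> kappa gamma x < kappa gamma mu.
Proof.
  intros Hg Hmu Hphi Hx.
  destruct (MVT_cor2 (kappa gamma) (fun y => - ((1 - y) * phi gamma y / (1 - gamma * y ^ 3) ^ 2))
              mu x) as [y [Hdiff Hy]]; [lra| |].
  - intros y Hy; apply is_derive_Reals; unfold kappa.
    assert (0 < 1 - gamma * y ^ 3) by (apply one_sub_gamma_cube_pos; lra).
    auto_derive; [lra|]. unfold phi; field; lra.
  - assert (0 < phi gamma y) by (apply (phi_pos_right gamma mu); lra).
    assert (0 < 1 - gamma * y ^ 3) by (apply one_sub_gamma_cube_pos; lra).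
    assert (0 < (1 - y) * phi gamma y / (1 - gamma * y ^ 3) ^ 2)
      by (apply Rdiv_lt_0_compat; [apply Rmult_lt_0_compat; lra | apply pow_lt; lra]).
    nra.
Qed.

Lemma kappa_pos gamma x : 0 <= gamma <= 1 -> 0 < x < 1 -> 0 < kappa gamma x.
Proof.
  intros Hg Hx; apply Rdiv_lt_0_compat; [apply Rmult_lt_0_compat; [apply pow_lt|]|]; try lra.
  apply one_sub_gamma_cube_pos; lra.
Qed.

Lemma locally_phi_pos gamma x :
  0 < x -> 0 < phi gamma x -> locally x (fun y => 0 < y /\ 0 < phi gamma y).
Proof.
  intros Hx Hphi; apply filter_and.
  - exact (filterlim_gt (fun y => y) x 0 (filterlim_id _ _) Hx).
  - apply (filterlim_gt (phi gamma) (phi gamma x) 0); [|exact Hphi].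
    apply continuity_pt_filterlim; unfold phi; reg.
Qed.

Lemma storm_path_kappa_bound (gamma : R) (g : R -> R) (gm gp : R) :
  0 <= gamma <= 1 -> (forall t, continuous g t) ->
  filterlim g (Rbar_locally m_infty) (locally gm) ->
  filterlim g (Rbar_locally p_infty) (locally gp) ->
  (forall t, 0 < g t < 1 /\ 0 < phi gamma (g t)) ->
  0 < gm -> 0 < phi gamma gm -> 0 < gp -> 0 < phi gamma gp ->
  exists mu K, 0 < mu < 1 /\ mu < gm /\ 0 < K /\ K * (1 - gamma * mu ^ 3) < (1 - mu) ^ 2 * mu /\
    forall t, kappa gamma (g t) <= K.
Proof.
  intros Hgamma Hc Hm Hp Hg Hgm Hphim Hgp Hphip.
  destruct (continuous_lim_lower_bound (fun y => 0 < y /\ 0 < phi gamma y) g gm gp Hc Hm Hp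
              (fun t => conj (proj1 (proj1 (Hg t))) (proj2 (Hg t)))
              (locally_phi_pos gamma gm Hgm Hphim) (locally_phi_pos gamma gp Hgp Hphip))
    as [M [[HM0 HMphi] [HMgm HMg]]].
  assert (HM1 : M < 1) by (generalize (HMg 0) (Hg 0); lra).
  destruct (locally_phi_pos gamma M HM0 HMphi) as [e He]; assert (He0 := cond_pos e).
  destruct (He (M - e / 2)) as [Hmu0 Hmuphi]; [apply R_ball; rewrite Rabs_left; lra|].
  assert (Hdenmu := one_sub_gamma_cube_pos gamma (M - e / 2) Hgamma ltac:(lra)).
  exists (M - e / 2), (kappa gamma M); repeat split; [lra | lra | lra | | |].
  - apply kappa_pos; lra.
  - apply (Rmult_lt_reg_r (/ (1 - gamma * (M - e / 2) ^ 3))); [apply Rinv_0_lt_compat, Hdenmu|].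
    rewrite Rmult_assoc, Rinv_r, Rmult_1_r by lra.
    apply (kappa_decreasing gamma (M - e / 2) M); lra.
  - intro t; destruct (Rle_lt_or_eq_dec _ _ (HMg t)) as [Hlt|Heq]; [|rewrite Heq; lra].
    left; apply kappa_decreasing; [| | |split]; try lra; apply Hg.
Qed.

Lemma stable_storm_path_gap (gamma Vpm : R) (Vp c lam : R -> R) (ps : R -> R * R)
  (Sm Sp : R * R) :
  0 <= gamma <= 1 -> (forall t, continuous ps t) -> (forall t, 0 < c (lam t)) ->
  (forall t, 0 < fst (ps t) /\ stable_eq gamma Vp c Vpm (lam t) (ps t)) ->
  cvg_to ps m_infty Sm -> cvg_to ps p_infty Sp ->
  0 < snd Sm -> 0 < phi gamma (snd Sm) -> 0 < snd Sp -> 0 < phi gamma (snd Sp) ->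
  exists mu K, 0 < mu < 1 /\ mu < snd Sm /\ 0 < K /\ K * (1 - gamma * mu ^ 3) < (1 - mu) ^ 2 * mu /\
    forall t, c (lam t) ^ 2 <= (1 - gamma) * Vp (lam t) ^ 2 / Vpm ^ 2 * K.
Proof.
  intros Hgamma Hps_cont Hcpos Hps Hps_m Hps_p HmSm HphiSm HmSp HphiSp.
  assert (Hpath : forall t, (0 < snd (ps t) < 1 /\ 0 < phi gamma (snd (ps t))) /\
            c (lam t) ^ 2 = (1 - gamma) * Vp (lam t) ^ 2 / Vpm ^ 2 * kappa gamma (snd (ps t))).
  { intro t; destruct (Hps t) as [Hv Hst].
    destruct (stable_storm_m_phi_pos _ _ _ _ _ _ Hv (Rlt_le _ _ (Hcpos t)) Hst) as [Hm Hphi].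
    assert (Heq := proj1 Hst).
    repeat split; [exact Hm | exact (storm_equilibrium_m_lt_1 _ _ _ _ _ _ Hv (Hcpos t) Heq)
                  | exact Hphi
                  | exact (storm_equilibrium_c_sqr _ _ _ _ _ _ Hgamma Hv (Hcpos t) Heq)]. }
  destruct (storm_path_kappa_bound gamma (fun t => snd (ps t)) (snd Sm) (snd Sp) Hgamma
              (fun t => cvg_to_snd ps t (ps t) (Hps_cont t))
              (cvg_to_snd _ _ _ Hps_m) (cvg_to_snd _ _ _ Hps_p) (fun t => proj1 (Hpath t))
              HmSm HphiSm HmSp HphiSp) as [mu [K [Hmu [HmuSm [HK [Hgap HkappaK]]]]]].
  exists mu, K; do 4 (split; [assumption|]); intro t.
  destruct (Hpath t) as [[Hm _] Hc2].
  assert (Hkappa := kappa_pos gamma _ Hgamma Hm).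
  assert (0 < c (lam t) ^ 2) by (apply pow_lt, Hcpos).
  rewrite Hc2; apply Rmult_le_compat_l; [nra | apply HkappaK].
Qed.

(** * The nonautonomous system *)

(* The inequalities on [w] make the vector field point into [{v > s w, m > mu}] on the faces
   [m = mu] and [v = s w], for [s] proportional to [sqrt a] resp. [s = q]; in the second case
   [(1 - mu) w < mS] puts the limit state inside the region. *)
Lemma exists_trap_width_sqrt_a (gamma mu K A : R) :
  0 <= gamma <= 1 -> 0 < mu < 1 -> 0 < K -> 0 < A ->
  K * (1 - gamma * mu ^ 3) < (1 - mu) ^ 2 * mu ->
  exists w, 0 <= w /\ A * K * mu ^ 2 < (1 - mu) ^ 2 * w ^ 2 /\
    (1 - gamma * mu ^ 3) * w ^ 2 < A * mu ^ 3.
Proof.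
  intros Hgamma Hmu HK HA Hgap.
  assert (Hden := one_sub_gamma_cube_pos gamma mu Hgamma ltac:(lra)).
  assert (H1mu : 0 < (1 - mu) ^ 2) by (apply pow_lt; lra).
  assert (Hmu2 : 0 < mu ^ 2) by (apply pow_lt; lra).
  set (y := A * K * mu ^ 2 / (1 - mu) ^ 2); set (x := A * mu ^ 3 / (1 - gamma * mu ^ 3)).
  assert (Hy : y * (1 - mu) ^ 2 = A * K * mu ^ 2) by (unfold y; field; lra).
  assert (Hx : x * (1 - gamma * mu ^ 3) = A * mu ^ 3) by (unfold x; field; lra).
  clearbody y x.
  assert (Hyx : 0 <= y < x).
  { split.
    { assert (0 < A * K * mu ^ 2) by (repeat apply Rmult_lt_0_compat; lra); nra. }
    apply (Rmult_lt_reg_r ((1 - mu) ^ 2 * (1 - gamma * mu ^ 3))); [apply Rmult_lt_0_compat; lra|].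
    replace (y * _) with (A * mu ^ 2 * (K * (1 - gamma * mu ^ 3)))
      by (transitivity (y * (1 - mu) ^ 2 * (1 - gamma * mu ^ 3)); [rewrite Hy|]; ring).
    replace (x * _) with (A * mu ^ 2 * ((1 - mu) ^ 2 * mu))
      by (transitivity (x * (1 - gamma * mu ^ 3) * (1 - mu) ^ 2); [rewrite Hx|]; ring).
    apply Rmult_lt_compat_l; [apply Rmult_lt_0_compat; lra | exact Hgap]. }
  destruct (exists_sqr_between y x Hyx) as [w [Hw [Hyw Hwx]]].
  exists w; split; [exact Hw|]; split; [rewrite <- Hy | rewrite <- Hx]; nra.
Qed.

Lemma exists_trap_width_q (gamma mu K mS : R) :
  0 <= gamma <= 1 -> 0 < mu < 1 -> 0 < K -> mu < mS ->
  K * (1 - gamma * mu ^ 3) < (1 - mu) ^ 2 * mu ->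
  exists w, 0 <= w /\ mu < (1 - mu) * w /\ (1 - mu) * w < mS /\
    (1 - gamma * mu ^ 3) * K * w ^ 2 < mu ^ 3.
Proof.
  intros Hgamma Hmu HK HmS Hgap.
  assert (Hden := one_sub_gamma_cube_pos gamma mu Hgamma ltac:(lra)).
  assert (HD : 0 < (1 - gamma * mu ^ 3) * K) by (apply Rmult_lt_0_compat; lra).
  set (lo := mu / (1 - mu)); set (hi := mS / (1 - mu));
    set (b := mu ^ 3 / ((1 - gamma * mu ^ 3) * K)).
  assert (Hlo : lo * (1 - mu) = mu) by (unfold lo; field; lra).
  assert (Hhi : hi * (1 - mu) = mS) by (unfold hi; field; lra).
  assert (Hb : b * ((1 - gamma * mu ^ 3) * K) = mu ^ 3) by (unfold b; field; lra).
  clearbody lo hi b.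
  assert (Hlo0 : 0 <= lo) by nra.
  assert (Hlohi : lo < hi) by nra.
  assert (Hlob : lo ^ 2 < b).
  { apply (Rmult_lt_reg_r ((1 - gamma * mu ^ 3) * K * (1 - mu) ^ 2)).
    { apply Rmult_lt_0_compat; [lra | apply pow_lt; lra]. }
    replace (lo ^ 2 * _) with (mu ^ 2 * (K * (1 - gamma * mu ^ 3)))
      by (transitivity ((lo * (1 - mu)) ^ 2 * ((1 - gamma * mu ^ 3) * K)); [rewrite Hlo|]; ring).
    replace (b * _) with (mu ^ 2 * ((1 - mu) ^ 2 * mu))
      by (transitivity (b * ((1 - gamma * mu ^ 3) * K) * (1 - mu) ^ 2); [rewrite Hb|]; ring).
    apply Rmult_lt_compat_l; [apply pow_lt; lra | exact Hgap]. }
  destruct (exists_sqr_between (lo ^ 2) (Rmin b (hi ^ 2))) as [w [Hw [Hlow Hwx]]].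
  { split; [apply pow2_ge_0 | apply Rmin_glb_lt; [exact Hlob | nra]]. }
  assert (Hwb : w ^ 2 < b) by (generalize (Rmin_l b (hi ^ 2)); lra).
  assert (Hwhi : w < hi) by (generalize (Rmin_r b (hi ^ 2)); nra).
  assert (Hlow' : lo < w) by nra.
  exists w; repeat split; [exact Hw | nra | nra |].
  assert (w ^ 2 * ((1 - gamma * mu ^ 3) * K) < b * ((1 - gamma * mu ^ 3) * K))
    by (apply Rmult_lt_compat_r; assumption).
  lra.
Qed.

Section StormModel.

Variables (gamma mu K : R) (a q v m : R -> R).
Hypothesis Hgamma : 0 <= gamma <= 1.
Hypothesis Hmu : 0 < mu < 1.
Hypothesis HK : 0 < K.
Hypothesis Hgap : K * (1 - gamma * mu ^ 3) < (1 - mu) ^ 2 * mu.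
Hypothesis Hq_pos : forall t, 0 < q t.
Hypothesis Hq_bound : forall t, q t ^ 2 <= a t * K.
Hypothesis Hv : forall t, is_derive v t (a t * m t ^ 3 - (1 - gamma * m t ^ 3) * v t ^ 2).
Hypothesis Hm : forall t, is_derive m t ((1 - m t) * v t - q t * m t).

Lemma m_stays_above (s : R -> R) (L w : R) (S : R * R) :
  0 <= w -> nonincreasing s -> (forall t, s t <= L) ->
  (forall t, (1 - gamma * mu ^ 3) * (s t * w) ^ 2 < a t * mu ^ 3) ->
  (forall t, q t * mu < (1 - mu) * (s t * w)) ->
  L * w < fst S -> mu < snd S -> cvg_to (fun t => (v t, m t)) m_infty S ->
  forall t, mu < m t.
Proof.
  intros Hw Hs HL Hv_in Hm_in HLS HmuS Hcvg t.
  refine (proj2 (trapped_region v m _ _ s w mu Hw Hv Hm Hs _ _ _ t)).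
  - intros u Hvu Hmu'; rewrite Hvu.
    assert (mu ^ 3 <= m u ^ 3) by (apply pow_incr; lra).
    assert (0 <= a u) by (generalize (Hq_bound u) (pow2_ge_0 (q u)); nra).
    assert (a u * mu ^ 3 <= a u * m u ^ 3) by (apply Rmult_le_compat_l; assumption).
    assert (0 <= gamma * (m u ^ 3 - mu ^ 3) * (s u * w) ^ 2)
      by (apply Rmult_le_pos; [apply Rmult_le_pos; lra | apply pow2_ge_0]).
    generalize (Hv_in u); lra.
  - intros u Hmu' Hvu; rewrite Hmu'; generalize (Hm_in u); nra.
  - generalize (filterlim_gt _ _ _ (cvg_to_fst _ _ _ Hcvg) HLS)
      (filterlim_gt _ _ _ (cvg_to_snd _ _ _ Hcvg) HmuS); cbn [fst snd].
    intros Hv_ev Hm_ev; eapply filter_imp; [|exact (filter_and _ _ Hv_ev Hm_ev)].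
    intros u [HvL Hmu']; split; [|exact Hmu'].
    apply (Rle_lt_trans _ (L * w)); [apply Rmult_le_compat_r|]; auto.
Qed.

Lemma m_stays_above_of_sqrt_a_nonincreasing (P : R -> R) (A L : R) (S : R * R) :
  (forall t, 0 < P t) -> nonincreasing P -> (forall t, P t <= L) ->
  (forall t, a t = A * P t ^ 2) ->
  0 < fst S -> mu < snd S -> A * L ^ 2 * snd S ^ 3 - (1 - gamma * snd S ^ 3) * fst S ^ 2 = 0 ->
  cvg_to (fun t => (v t, m t)) m_infty S -> forall t, mu < m t.
Proof.
  intros HPpos HP HPL Ha HvS HmS HS; apply Rminus_diag_uniq_sym in HS.
  assert (HA : 0 < A).
  { generalize (Hq_bound 0) (pow_lt _ 2 (Hq_pos 0)) (pow_lt _ 2 (HPpos 0)); rewrite Ha.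
    intros; apply (Rmult_lt_reg_r (P 0 ^ 2 * K)); [apply Rmult_lt_0_compat; lra | nra]. }
  destruct (exists_trap_width_sqrt_a gamma mu K A Hgamma Hmu HK HA Hgap) as [w [Hw [Hwm Hwv]]].
  apply (m_stays_above P L w S Hw HP HPL); [| | |exact HmS].
  - intro t; rewrite Ha.
    assert (HP2 : 0 < P t ^ 2) by (apply pow_lt, HPpos).
    replace ((1 - gamma * mu ^ 3) * (P t * w) ^ 2) with (P t ^ 2 * ((1 - gamma * mu ^ 3) * w ^ 2))
      by ring.
    replace (A * P t ^ 2 * mu ^ 3) with (P t ^ 2 * (A * mu ^ 3)) by ring.
    apply Rmult_lt_compat_l; assumption.
  - intro t; apply lt_of_sqr_lt.
    { apply Rmult_le_pos; [lra | apply Rmult_le_pos; [apply Rlt_le, HPpos | exact Hw]]. }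
    assert (HP2 : 0 < P t ^ 2) by (apply pow_lt, HPpos).
    assert (Hq2 := Hq_bound t); rewrite Ha in Hq2.
    apply (Rle_lt_trans _ (P t ^ 2 * (A * K * mu ^ 2))).
    { replace (P t ^ 2 * _) with (A * P t ^ 2 * K * mu ^ 2) by ring.
      replace ((q t * mu) ^ 2) with (q t ^ 2 * mu ^ 2) by ring.
      apply Rmult_le_compat_r; [apply pow2_ge_0 | exact Hq2]. }
    replace (((1 - mu) * (P t * w)) ^ 2) with (P t ^ 2 * ((1 - mu) ^ 2 * w ^ 2)) by ring.
    apply Rmult_lt_compat_l; assumption.
  - assert (HL : 0 < L) by exact (Rlt_le_trans _ _ _ (HPpos 0) (HPL 0)).
    assert (HmS3 : mu ^ 3 < snd S ^ 3) by (apply pow3_lt_compat; lra).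
    assert (HL2m : 0 < A * L ^ 2 * snd S ^ 3).
    { repeat apply Rmult_lt_0_compat; try apply pow_lt; lra. }
    assert (HDS : 0 < 1 - gamma * snd S ^ 3) by (generalize (pow_lt _ 2 HvS); nra).
    assert (Hw3 : (1 - gamma * snd S ^ 3) * w ^ 2 < A * snd S ^ 3).
    { assert (0 <= gamma * (snd S ^ 3 - mu ^ 3) * w ^ 2)
        by (apply Rmult_le_pos; [apply Rmult_le_pos; lra | apply pow2_ge_0]).
      nra. }
    apply lt_of_sqr_lt; [lra|].
    apply (Rmult_lt_reg_r (1 - gamma * snd S ^ 3)); [exact HDS|].
    replace (fst S ^ 2 * (1 - gamma * snd S ^ 3)) with (L ^ 2 * (A * snd S ^ 3))
      by (rewrite (Rmult_comm (fst S ^ 2)), HS; ring).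
    replace ((L * w) ^ 2 * (1 - gamma * snd S ^ 3))
      with (L ^ 2 * ((1 - gamma * snd S ^ 3) * w ^ 2)) by ring.
    apply Rmult_lt_compat_l; [apply pow_lt|]; assumption.
Qed.

Lemma m_stays_above_of_q_nonincreasing (L : R) (S : R * R) :
  nonincreasing q -> (forall t, q t <= L) ->
  0 < fst S -> mu < snd S -> (1 - snd S) * fst S - L * snd S = 0 ->
  cvg_to (fun t => (v t, m t)) m_infty S -> forall t, mu < m t.
Proof.
  intros Hq HqL HvS HmS HS.
  destruct (exists_trap_width_q gamma mu K (snd S) Hgamma Hmu HK HmS Hgap)
    as [w [Hw [Hwm [HwS Hwv]]]].
  apply (m_stays_above q L w S Hw Hq HqL); [| | |exact HmS].
  - intro t.
    assert (Ha : 0 < a t) by (generalize (Hq_bound t) (pow_lt _ 2 (Hq_pos t)); nra).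
    apply (Rle_lt_trans _ (a t * ((1 - gamma * mu ^ 3) * K * w ^ 2))).
    { replace ((1 - gamma * mu ^ 3) * (q t * w) ^ 2)
        with (q t ^ 2 * ((1 - gamma * mu ^ 3) * w ^ 2)) by ring.
      replace (a t * _) with (a t * K * ((1 - gamma * mu ^ 3) * w ^ 2)) by ring.
      apply Rmult_le_compat_r; [|apply Hq_bound].
      apply Rmult_le_pos; [|apply pow2_ge_0].
      apply Rlt_le, one_sub_gamma_cube_pos; lra. }
    apply Rmult_lt_compat_l; assumption.
  - intro t; replace ((1 - mu) * (q t * w)) with (q t * ((1 - mu) * w)) by ring.
    apply Rmult_lt_compat_l; [apply Hq_pos | exact Hwm].
  - apply (Rmult_lt_reg_l (snd S)); [lra|].
    replace (snd S * (L * w)) with ((1 - snd S) * w * fst S) by (rewrite <- Rmult_assoc; nra).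
    apply Rmult_lt_compat_r; [exact HvS|].
    apply (Rle_lt_trans _ ((1 - mu) * w)); [apply Rmult_le_compat_r; lra | exact HwS].
Qed.

End StormModel.

Theorem theorem3p8 (gamma : R) (Lam Vp c : R -> R) (lm lp Vpm : R)
  (Um Sm Up Sp : R * R) :
  0 <= gamma <= 1 ->
  C2 Lam ->
  (forall s t, s <= t -> Lam s <= Lam t) ->
  bi_asymp_const Lam lm lp ->
  (forall x, continuous Vp x) -> (forall x, continuous c x) ->
  (forall t, 0 < Vp (Lam t)) -> (forall t, 0 < c (Lam t)) ->
  is_lim (fun t => Vp (Lam t)) m_infty Vpm -> 0 < Vpm ->
  three_equilibria gamma Vp c Vpm lm Um Sm ->
  three_equilibria gamma Vp c Vpm lp Up Sp ->
  forall r : R, 0 < r ->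
  forall pu ps : R -> R * R,
  (forall t, continuous pu t) -> (forall t, continuous ps t) ->
  (forall t, 0 < fst (pu t) /\ saddle_eq gamma Vp c Vpm (Lam (r * t)) (pu t)) ->
  (forall t, 0 < fst (ps t) /\ stable_eq gamma Vp c Vpm (Lam (r * t)) (ps t)) ->
  (forall t, pu t <> ps t) ->
  cvg_to pu m_infty Um -> cvg_to pu p_infty Up ->
  cvg_to ps m_infty Sm -> cvg_to ps p_infty Sp ->
  (nonincreasing (fun t => Vp (Lam (r * t))) \/
   nonincreasing (fun t => c (Lam (r * t)))) ->
  forall v m : R -> R,
  (forall t, is_derive v t
     ((1 - gamma) * (Vp (Lam (r * t))) ^ 2 / Vpm ^ 2 * (m t) ^ 3
      - (1 - gamma * (m t) ^ 3) * (v t) ^ 2)) ->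
  (forall t, is_derive m t ((1 - m t) * v t - c (Lam (r * t)) * m t)) ->
  cvg_to (fun t => (v t, m t)) m_infty Sm ->
  ~ cvg_to (fun t => (v t, m t)) p_infty (0, 0).
Proof.
  intros Hgamma _ _ [HLm [HLp _]] HVp Hc HVpos Hcpos HVlim _ [_ [HvSm [_ [HSm _]]]]
    [_ [HvSp [_ [HSp _]]]] r Hr pu ps _ Hps_cont _ Hps _ _ _ Hps_m Hps_p Hmono v m Hv Hm Hstart.
  assert (Hscale : forall f (l : R), is_lim (fun t => f (Lam t)) m_infty l ->
                     filterlim (fun t => f (Lam (r * t))) (Rbar_locally m_infty) (locally l))
    by (intros f l Hf; exact (filterlim_comp _ _ _ _ _ _ _ _ (filterlim_scal_m_infty r Hr) Hf)).
  assert (Hc_lim : forall x (l : R), is_lim Lam x l -> 0 <= c l)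
    by (intros x l Hl;
        exact (filterlim_ge_of_gt _ _ _ (is_lim_comp_continuous _ _ _ _ Hl (Hc l)) Hcpos)).
  destruct (stable_storm_m_phi_pos _ _ _ _ _ _ HvSm (Hc_lim _ _ HLm) HSm) as [HmSm HphiSm].
  destruct (stable_storm_m_phi_pos _ _ _ _ _ _ HvSp (Hc_lim _ _ HLp) HSp) as [HmSp HphiSp].
  destruct (stable_storm_path_gap gamma Vpm Vp c (fun t => Lam (r * t)) ps Sm Sp Hgamma Hps_cont
              (fun t => Hcpos (r * t)) Hps Hps_m Hps_p HmSm HphiSm HmSp HphiSp)
    as [mu [K [Hmu [HmuSm [HK [Hgap Hq_bound]]]]]].
  apply (not_cvg_origin v m mu (proj1 Hmu)).
  destruct HSm as [[E1 E2] _]; destruct Hmono as [HP | Hq].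
  - assert (HVlm : Vp lm = Vpm).
    { generalize (is_lim_unique _ _ _ (is_lim_comp_continuous _ _ _ _ HLm (HVp lm)))
        (is_lim_unique _ _ _ HVlim); intros El Er; rewrite El in Er; injection Er; auto. }
    unfold F1 in E1; rewrite HVlm in E1.
    refine (m_stays_above_of_sqrt_a_nonincreasing gamma mu K _ _ v m Hgamma Hmu HK Hgap
              (fun t => Hcpos (r * t)) Hq_bound Hv Hm
              (fun t => Vp (Lam (r * t))) ((1 - gamma) / Vpm ^ 2) Vpm Sm
              (fun t => HVpos (r * t)) HP (nonincreasing_le_lim_m_infty _ _ HP (Hscale _ _ HVlim))
              _ HvSm HmuSm _ Hstart);
      [intro t; unfold Rdiv; ring | rewrite <- E1; unfold Rdiv; ring].
  - exact (m_stays_above_of_q_nonincreasing gamma mu K _ _ v m Hgamma Hmu HK Hgap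
             (fun t => Hcpos (r * t)) Hq_bound Hv Hm (c lm) Sm Hq
             (nonincreasing_le_lim_m_infty _ _ Hq
                (Hscale _ _ (is_lim_comp_continuous _ _ _ _ HLm (Hc lm))))
             HvSm HmuSm E2 Hstart).
Qed.
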